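(* Let $p$ be a prime and $a,b,c\ge0$ integers with $a,b<p$ and $c\le a+b$. Then: (1) $\deg f(a,b,c)=\min\{a,c\}$; (2) $v_t(f(a,b,c))=\max\{0,c-b\}$; (3) $v_{t-1}(f(a,b,c))=a+b-(p-1)$ if $a+b-(p-1)\le c\le p-1<a+b$, and $v_{t-1}(f(a,b,c))=0$ otherwise.
   Context: For non-negative integers $a,b,c$, $f(a,b,c)\in\overline{\mathbb{F}}_p[t]$ is the polynomial $f(a,b,c)=\sum_{i_2+i_3=c}\binom{a}{i_2}\binom{b}{i_3}t^{i_2}$ (binomial coefficients reduced mod $p$, $\binom{n}{i}=0$ for $i<0$ or $i>n$); equivalently the coefficient of $\lambda^c$ in $(1+\lambda t)^a(1+\lambda)^b$. $v_t$ and $v_{t-1}$ denote the orders of vanishing at $t=0$ and $t=1$. *)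

From mathcomp Require Import all_boot all_order all_algebra.
Set Implicit Arguments. Unset Strict Implicit. Unset Printing Implicit Defensive.
Import GRing.Theory.
Local Open Scope ring_scope.

(* f(a,b,c) = sum_{i2+i3=c} C(a,i2) C(b,i3) t^{i2}, with the binomial
   coefficients cast (hence reduced mod p) into the coefficient field F.
   The sum over i2 = i ranges over 0..c with i3 = c - i. *)
Definition fpol (F : fieldType) (a b c : nat) : {poly F} :=
  \sum_(i < c.+1) (('C(a, i) * 'C(b, c - i))%N)%:R *: 'X^i.

From mathcomp Require Import all_boot all_order all_algebra.
From mathcomp Require Import zify ring.
Import GRing.Theory.

Set Implicit Arguments.
Unset Strict Implicit.
Unset Printing Implicit Defensive.

(* The coefficients C(a,i) C(b,c-i) of f(a,b,c) are nonzero mod p whenever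
   both binomials are nonzero, since a, b < p; this gives the degree and v_t.
   For v_{t-1}, Vandermonde's identity yields the expansion
   f(t+1) = sum_k C(a,k) C(a+b-k,c-k) t^k.  For n < 2p, p divides C(n,m)
   exactly when m < p <= n and n - m < p, so the first coefficient of f(t+1)
   that survives mod p is the one at k = a+b-(p-1) when p | C(a+b,c) = f(1),
   and the constant one otherwise. *)

Lemma mul_bin_binl n m k : k <= m ->
  'C(n, m) * 'C(m, k) = 'C(n, k) * 'C(n - k, m - k).
Proof.
move=> km; have [nm | mn] := ltnP n m.
  rewrite bin_small // mul0n; have [kn | nk] := leqP k n.
    by rewrite (@bin_small (n - k)) ?muln0 //; lia.
  by rewrite bin_small.
(* Multiplied by k! (m-k)! (n-m)!, both sides become n!. *)
apply/eqP; rewrite -(@eqn_pmul2r (k`! * (m - k)`! * (n - m)`!)); last first.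
  by rewrite !muln_gt0 !fact_gt0.
have -> : ('C(n, m) * 'C(m, k) * (k`! * (m - k)`! * (n - m)`!) =
    'C(n, m) * ('C(m, k) * (k`! * (m - k)`!)) * (n - m)`!) by ring.
have -> : ('C(n, k) * 'C(n - k, m - k) * (k`! * (m - k)`! * (n - m)`!) =
    'C(n, k) * k`! * ('C(n - k, m - k) * ((m - k)`! * (n - k - (m - k))`!))).
  by rewrite (_ : n - k - (m - k) = n - m); [ring | lia].
by rewrite bin_fact // bin_fact ?leq_sub2r // -!mulnA !bin_fact //;
  exact: leq_trans km _.
Qed.

Lemma sum_bin_mul_bin a b c k : k <= c ->
  \sum_(i < c.+1) 'C(a, i) * 'C(b, c - i) * 'C(i, k) =
  'C(a, k) * 'C(a + b - k, c - k).
Proof.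
move=> kc.
rewrite -(big_mkord xpredT (fun i => 'C(a, i) * 'C(b, c - i) * 'C(i, k))).
rewrite (@big_cat_nat _ _ _ k) //=; last exact: leqW.
rewrite big1_seq ?add0n => [|i]; last first.
  by rewrite mem_index_iota => /andP[_ ik]; rewrite (@bin_small i) ?muln0.
rewrite -{1}[k]add0n big_addn.
under eq_bigr => i _ do
  rewrite mulnAC mul_bin_binl ?leq_addl // addnK -mulnA subnDA subnAC.
rewrite -big_distrr /= subSn // big_mkord binomial.Vandermonde.
have [ka | ak] := leqP k a; first by rewrite -addnBAC.
by rewrite bin_small.
Qed.

Lemma prime_dvdn_fact p n : prime p -> (p %| n`!) = (p <= n).
Proof.
move=> pr_p; apply/idP/idP => [|pn]; last by rewrite dvdn_fact ?prime_gt0.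
elim: n => [|n IHn]; first by rewrite fact0 Euclid_dvd1.
rewrite factS Euclid_dvdM // => /orP[/(dvdn_leq (ltn0Sn n)) // | /IHn].
exact: leqW.
Qed.

Lemma prime_ndvdn_bin_ge p n m : prime p -> p <= m <= n -> n < p.*2 ->
  ~~ (p %| 'C(n, m)).
Proof.
(* C(n, n-m) (n-m)! is the product of the n - i, i < n - m, which all lie
   strictly between p and 2p. *)
move=> pr_p /andP[pm mn] np; rewrite -bin_sub //.
apply/negP => /(dvdn_mulr (n - m)`!); rewrite bin_ffact ffact_prod.
rewrite Euclid_dvd_prod // big1 // => i _; apply/negbTE.
have lt_i_nm := ltn_ord i.
by apply/negP => /dvdn_sub/(_ (dvdnn p)); rewrite gtnNdvd //; lia.
Qed.

Lemma prime_dvdn_bin p n m : prime p -> m <= n -> n < p.*2 ->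
  (p %| 'C(n, m)) = [&& m < p, p <= n & n - m < p].
Proof.
move=> pr_p mn np; have [pm | mp] := leqP p m.
  by rewrite (negbTE (prime_ndvdn_bin_ge pr_p _ np)) ?pm.
have [pnm | nmp] := leqP p (n - m).
  rewrite -bin_sub // (negbTE (prime_ndvdn_bin_ge pr_p _ np)) ?andbF //.
  by rewrite pnm leq_subr.
have := prime_dvdn_fact n pr_p.
rewrite -(bin_fact mn) !Euclid_dvdM // !prime_dvdn_fact // leqNgt mp leqNgt nmp.
by rewrite /= !orbF andbT.
Qed.

Local Open Scope ring_scope.

Lemma coef_XaddC1_exp (R : nzRingType) n k :
  (('X + 1) ^+ n : {poly R})`_k = 'C(n, k)%:R.
Proof.
elim: n k => [|n IHn] k; first by rewrite expr0 coefC bin0n; case: k.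
rewrite exprS mulrDl mul1r coefD coefXM.
by case: k => [|k] /=; rewrite !IHn ?bin0 ?add0r // binS natrD addrC.
Qed.

Lemma mup_comp_XsubC (F : fieldType) (x : F) (h : {poly F}) k :
  (forall j, (j < k)%N -> h`_j = 0) -> h`_k != 0 ->
  mup x (h \Po ('X - x%:P)) = k.
Proof.
move=> h_lt_k hk_neq0.
have -> : h = drop_poly k h * 'X^k.
  rewrite -{1}(poly_take_drop k h) addrC -[RHS]addr0; congr (_ + _).
  by apply/polyP => j; rewrite coef_take_poly coef0; case: ifP => // /h_lt_k.
rewrite comp_polyM comp_Xn_poly mupMr ?mup_XsubCX ?eqxx //.
by rewrite /root horner_comp !hornerE subrr horner_coef0 coef_drop_poly add0n.
Qed.

Lemma coef_fpol (F : fieldType) a b c i :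
  (fpol F a b c)`_i = if (i <= c)%N then ('C(a, i) * 'C(b, c - i))%:R else 0.
Proof.
by rewrite /fpol -(poly_def c.+1 (fun i => ('C(a, i) * 'C(b, c - i))%:R))
  coef_poly.
Qed.

Lemma comp_fpol_XaddC1 (F : fieldType) a b c :
  fpol F a b c \Po ('X + 1%:P) =
  \poly_(k < c.+1) ('C(a, k) * 'C(a + b - k, c - k))%:R.
Proof.
apply/polyP => k; rewrite coef_poly /fpol raddf_sum coef_sum /=.
under eq_bigr do rewrite comp_polyZ comp_Xn_poly coefZ coef_XaddC1_exp -natrM.
rewrite -natr_sum; case: ltnP => [kc | ck]; first by rewrite sum_bin_mul_bin.
rewrite big1 // => i _; rewrite (@bin_small i) ?muln0 //.
exact: leq_trans (ltn_ord i) ck.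
Qed.

Section FpolModp.

Variables (F : fieldType) (p a b c : nat).
Hypotheses (pF : p \in [pchar F]) (lt_a_p : (a < p)%N) (lt_b_p : (b < p)%N)
  (le_c_ab : (c <= a + b)%N).

Let natf_bin_eq0 n m : (m <= n)%N -> (n < p.*2)%N ->
  ('C(n, m)%:R == 0 :> F) = [&& m < p, p <= n & n - m < p]%N.
Proof.
by move=> mn np; rewrite -(dvdn_pcharf pF) prime_dvdn_bin ?(pcharf_prime pF).
Qed.

Let coef_fpol_neq0 i : (i <= a)%N -> (c - i <= b)%N -> (i <= c)%N ->
  (fpol F a b c)`_i != 0.
Proof.
move=> ia cib ic; rewrite coef_fpol ic natrM mulf_neq0 // natf_bin_eq0; lia.
Qed.

Lemma size_fpol : size (fpol F a b c) = (minn a c).+1.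
Proof.
apply/eqP; rewrite eqn_leq; apply/andP; split.
  apply/leq_sizeP => j lt_m_j; rewrite coef_fpol; case: ifP => // le_j_c.
  by rewrite bin_small ?mul0n //; lia.
rewrite ltnNge; apply/negP => /leq_sizeP/(_ _ (leqnn _))/eqP.
by apply/negP/coef_fpol_neq0; lia.
Qed.

Lemma mup0_fpol : mup 0 (fpol F a b c) = (c - b)%N.
Proof.
rewrite -[fpol F a b c]comp_polyXr -[X in _ \Po X]subr0 -polyC0.
apply: mup_comp_XsubC => [j lt_j_cb|]; last by apply: coef_fpol_neq0; lia.
by rewrite coef_fpol; case: ifP => // _; rewrite (@bin_small b) ?muln0 //; lia.
Qed.

Lemma mup1_fpol : mup 1 (fpol F a b c) =
  (if [&& (a + b - (p - 1) <= c)%N, (c <= p - 1)%N & (p - 1 < a + b)%N]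
   then (a + b - (p - 1))%N else 0%N).
Proof.
rewrite -[fpol F a b c](comp_polyXaddC_K _ 1) comp_fpol_XaddC1.
case: ifP => cond; apply: mup_comp_XsubC => [j lt_j_K|]; rewrite coef_poly //.
- case: ifP => // le_j_c; apply/eqP.
  by rewrite natrM mulf_eq0 !natf_bin_eq0; lia.
- by rewrite ifT; [rewrite natrM mulf_eq0 !natf_bin_eq0; lia | lia].
- by rewrite /= natrM mulf_eq0 !natf_bin_eq0; lia.
Qed.

End FpolModp.

Theorem lemmaA2 (F : closedFieldType) (p a b c : nat) :
  prime p -> p \in [pchar F] ->
  (a < p)%N -> (b < p)%N -> (c <= a + b)%N ->
  [/\ size (fpol F a b c) = (minn a c).+1,
      mup 0 (fpol F a b c) = maxn 0 (c - b)
    & mup 1 (fpol F a b c) =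
      (if [&& (a + b - (p - 1) <= c)%N, (c <= p - 1)%N & (p - 1 < a + b)%N]
       then (a + b - (p - 1))%N else 0%N)].
Proof.
move=> _ pF lt_a_p lt_b_p le_c_ab; rewrite max0n.
split; [exact: (size_fpol pF) | exact: (mup0_fpol pF) |].
exact: (mup1_fpol pF).
Qed.
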